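(* For every even integer $s_x\ge 0$, $k^*(s_x,2)=2\,k^*(s_x,0)$.
   Context: For integers $a\le b$, $[a,b]$ denotes $\{a,\dots,b\}$. A planar additive basis for $R=[0,s_x]\times[0,s_y]$ is a set $A$ of points with non-negative integer coordinates with $A+A\supseteq R$ ($A+A$ the vector sumset, summands may coincide). For even $s_x,s_y$, a basis is restricted if $A\subseteq[0,s_x/2]\times[0,s_y/2]$. $k^*(s_x,s_y)$ denotes the minimum cardinality of a restricted planar additive basis for $[0,s_x]\times[0,s_y]$; in particular $k^*(s_x,0)$ is the minimum size of a set $E\subseteq[0,s_x/2]$ of integers with $E+E\supseteq[0,s_x]$. *)

From mathcomp Require Import all_boot.
Set Implicit Arguments. Unset Strict Implicit. Unset Printing Implicit Defensive.

Definition rbox (sx sy : nat) : finType := ('I_(sx./2.+1) * 'I_(sy./2.+1))%type.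

Definition restricted_basis (sx sy : nat) (A : {set rbox sx sy}) : bool :=
  [forall x : 'I_sx.+1, forall y : 'I_sy.+1,
    [exists a in A, exists b in A,
      (a.1 + b.1 == x :> nat) && (a.2 + b.2 == y :> nat)]].

(* The minimum ranges over all subsets of the box;
   the default #|box| is harmless since the full box is itself a basis for even
   sx, sy. *)
Definition kstar (sx sy : nat) : nat :=
  \big[minn/#|rbox sx sy|]_(A : {set rbox sx sy} | restricted_basis A) #|A|.

From HB Require Import structures.
From mathcomp Require Import all_boot zify.
Set Implicit Arguments. Unset Strict Implicit. Unset Printing Implicit Defensive.

(* A restricted basis A of [0,sx] x [0,2] lives in the two rows y = 0 and y = 1 of the
   box.  The points (x,0) can only be sums of two points of the bottom row and the points
   (x,2) only sums of two points of the top row, so both rows are bases of [0,sx] and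
   #|A| >= 2 k*(sx,0).  Conversely, if E is a basis of [0,sx] then E x {0,1} is a basis
   of [0,sx] x [0,2], because {0,1} + {0,1} = [0,2]. *)

HB.instance Definition _ := SemiGroup.isComLaw.Build nat minn minnA minnC.

Section Kstar.

Variables sx sy : nat.

Lemma kstar_le (A : {set rbox sx sy}) : restricted_basis A -> kstar sx sy <= #|A|.
Proof. by move=> HA; rewrite /kstar (big_rem_AC _ _ _ _ (mem_index_enum A)) HA geq_minl. Qed.

Lemma kstar_attained (A : {set rbox sx sy}) : restricted_basis A ->
  exists2 B : {set rbox sx sy}, restricted_basis B & #|B| = kstar sx sy.
Proof.
move=> HA.
pose attained k := #|rbox sx sy| <= k \/
  exists2 B : {set rbox sx sy}, restricted_basis B & #|B| = k.
have [big_kstar|//] : attained (kstar sx sy).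
  apply: big_ind => [|m n Pm Pn|B HB]; [by left | | by right; exists B].
  by rewrite /minn; case: ltnP.
exists A => //; apply/eqP; rewrite eqn_leq kstar_le // andbT.
exact: leq_trans (max_card _) big_kstar.
Qed.

Lemma restricted_basisP (A : {set rbox sx sy}) :
  reflect (forall x y, x <= sx -> y <= sy -> exists a b, [/\ a \in A, b \in A,
             a.1 + b.1 = x :> nat & a.2 + b.2 = y :> nat])
          (restricted_basis A).
Proof.
apply: (iffP forallP) => [H x y hx hy | H x].
  have /forallP/(_ (Ordinal (hy : y < sy.+1))) := H (Ordinal (hx : x < sx.+1)).
  by case/exists_inP => a aA /exists_inP [b bA /andP [/eqP e1 /eqP e2]]; exists a, b.
apply/forallP => y; have [a [b [aA bA e1 e2]]] := H x y (ltn_ord x) (ltn_ord y).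
by apply/exists_inP; exists a => //; apply/exists_inP; exists b; rewrite // e1 e2 !eqxx.
Qed.

Definition row (A : {set rbox sx sy}) (j : 'I_(sy./2.+1)) : {set 'I_(sx./2.+1)} :=
  [set x | (x, j) \in A].

Lemma card_rows_le (A : {set rbox sx sy}) j k :
  j != k -> #|row A j| + #|row A k| <= #|A|.
Proof.
have card_row i : #|row A i| = #|[set p in A | p.2 == i]|.
  have pair_inj : injective (fun x : 'I_(sx./2.+1) => (x, i)) by move=> x y [].
  rewrite -(card_imset _ pair_inj).
  apply: eq_card => -[x y]; rewrite [RHS]inE /=.
  apply/imsetP/andP => [[x' x'A [-> ->]] | [xyA /eqP <-]]; first by rewrite inE in x'A.
  by exists x; rewrite ?inE.
move=> jk; rewrite !card_row -cardsUI.
suff -> : [set p in A | p.2 == j] :&: [set p in A | p.2 == k] = set0.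
  rewrite cards0 addn0 subset_leq_card //; apply/subsetP => p.
  by rewrite !inE => /orP [] /andP [].
apply/setP => p; rewrite !inE; apply/negP => /andP [/andP [_ /eqP pj] /andP [_ /eqP pk]].
by move: jk; rewrite -pj -pk eqxx.
Qed.

End Kstar.

Definition line sx (E : {set 'I_(sx./2.+1)}) : {set rbox sx 0} := setX E [set: 'I_1].

Lemma card_line sx (E : {set 'I_(sx./2.+1)}) : #|line E| = #|E|.
Proof. by rewrite cardsX cardsT card_ord muln1. Qed.

Lemma line_row0 sx (A : {set rbox sx 0}) : line (row A ord0) = A.
Proof. by apply/setP => -[x y]; rewrite (ord1 y) !inE andbT. Qed.

Lemma line_basisP sx (E : {set 'I_(sx./2.+1)}) :
  reflect (forall x, x <= sx -> exists a b, [/\ a \in E, b \in E & a + b = x :> nat])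
          (restricted_basis (line E)).
Proof.
apply: (iffP (restricted_basisP _)) => [H x hx | H x y hx].
  have [[a1 a2] [[b1 b2] [/setXP [aE _] /setXP [bE _] ab _]]] := H x 0 hx isT.
  by exists a1, b1.
rewrite leqn0 => /eqP ->; have [a [b [aE bE ab]]] := H x hx.
by exists (a, ord0), (b, ord0); rewrite !inE aE bE.
Qed.

Lemma line_basis_full s : ~~ odd s -> restricted_basis (line [set: 'I_(s./2.+1)]).
Proof.
move=> /even_halfK s_even; apply/line_basisP => x hx.
have ha : minn x s./2 < s./2.+1 by rewrite ltnS geq_minr.
have hb : x - minn x s./2 < s./2.+1 by lia.
by exists (Ordinal ha), (Ordinal hb); rewrite !inE /= subnKC // geq_minl.
Qed.

Lemma restricted_basis_setX sx sy (E : {set 'I_(sx./2.+1)}) (F : {set 'I_(sy./2.+1)}) :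
  restricted_basis (line E) -> restricted_basis (line F) ->
  restricted_basis (setX E F : {set rbox sx sy}).
Proof.
move=> /line_basisP HE /line_basisP HF; apply/restricted_basisP => x y hx hy.
have [a [b [aE bE ab]]] := HE x hx; have [c [d [cF dF cd]]] := HF y hy.
by exists (a, c), (b, d); rewrite !inE aE bE cF dF.
Qed.

Lemma restricted_basis_row0 sx sy (A : {set rbox sx sy}) :
  restricted_basis A -> restricted_basis (line (row A ord0)).
Proof.
move=> /restricted_basisP HA; apply/line_basisP => x hx.
have [[a1 a2] [[b1 b2] [aA bA /= ab /eqP]]] := HA x 0 hx (leq0n _).
rewrite addn_eq0 => /andP [/eqP a2_zero /eqP b2_zero].
have a2_0 : a2 = ord0 by apply: val_inj.
have b2_0 : b2 = ord0 by apply: val_inj.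
by rewrite a2_0 in aA; rewrite b2_0 in bA; exists a1, b1; rewrite !inE.
Qed.

Lemma restricted_basis_row_max sx sy (A : {set rbox sx sy}) : ~~ odd sy ->
  restricted_basis A -> restricted_basis (line (row A ord_max)).
Proof.
move=> /even_halfK sy_even /restricted_basisP HA; apply/line_basisP => x hx.
have [[a1 a2] [[b1 b2] [aA bA /= ab a2b2]]] := HA x sy hx (leqnn _).
have := ltn_ord a2; have := ltn_ord b2; rewrite !ltnS => a2_le b2_le.
have a2_max : a2 = ord_max by apply: val_inj => /=; lia.
have b2_max : b2 = ord_max by apply: val_inj => /=; lia.
by rewrite a2_max in aA; rewrite b2_max in bA; exists a1, b1; rewrite !inE.
Qed.

Theorem mainTheorem3 (sx : nat) : ~~ odd sx -> kstar sx 2 = 2 * kstar sx 0.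
Proof.
move=> sx_even; have line_full := line_basis_full sx_even.
have grid_full := restricted_basis_setX line_full (line_basis_full (isT : ~~ odd 2)).
apply/eqP; rewrite eqn_leq; apply/andP; split.
- have [A A_basis <-] := kstar_attained line_full.
  rewrite -(line_row0 A) card_line in A_basis *.
  rewrite mulnC -[X in _ * X](card_ord 2) -cardsT -cardsX.
  exact: kstar_le (restricted_basis_setX A_basis (line_basis_full _)).
- have [B B_basis <-] := kstar_attained grid_full.
  apply: leq_trans (card_rows_le (j := ord0) (k := ord_max) B isT).
  rewrite mul2n -addnn -!(card_line (row B _)).
  by apply: leq_add; apply: kstar_le;
    [exact: restricted_basis_row0 | exact: restricted_basis_row_max].
Qed.
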